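(* Let $A=[a_1\ \dots\ a_m]^T\in Mat(m,1,\mathfrak m)$ with $m\le s$, and let $\Theta$ be a presentation matrix (with $m$ rows, whose columns generate $\tilde T^e_A(GA)$) of the $R$-module $M_{m,1}/\tilde T^e_A(GA)$; for instance the $m\times(m^2+s)$ matrix whose first $s$ columns are the columns of $Jac(A)$ followed by the $m^2$ columns $a_q e_p$ ($p,q=1,\dots,m$, $e_p$ the standard basis of $R^m$). Then $$\sqrt{I_1(A)+I_m(Jac(A))}=\sqrt{I_m(\Theta)}=\sqrt{\mathrm{Ann}_R\big(M_{m,1}/\tilde T^e_A(GA)\big)}.$$ In particular, $\dim_K M_{m,1}/\tilde T^e_A(GA)<\infty$ if and only if $\dim_K R/(I_1(A)+I_m(Jac(A)))<\infty$.
   Context: $K$ is a field, $R=K[[x_1,\dots,x_s]]$, $\mathfrak m=\langle x_1,\dots,x_s\rangle$, $M_{m,1}=Mat(m,1,R)\cong R^m$. For $A=[a_1\ \dots\ a_m]^T$, $Jac(A)=[\partial a_i/\partial x_j]\in Mat(m,s,R)$, $I_1(A)=\langle a_1,\dots,a_m\rangle$, and $I_t(\cdot)$ denotes the ideal of $t\times t$ minors. The extended tangent image is the submodule $\tilde T^e_A(GA):=I_1(A)\,R^m+\text{(the }R\text{-submodule of }R^m\text{ generated by the columns of }Jac(A))$. *)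

(* The formal power series ring K[[x_1..x_s]] is modelled
   concretely: a series is its coefficient function on monomials
   (exponent vectors 'I_s -> nat). *)
From HB Require Import structures.
From mathcomp Require Import all_boot all_order all_fingroup all_algebra.
Set Implicit Arguments. Unset Strict Implicit. Unset Printing Implicit Defensive.
Import GRing.Theory.
Local Open Scope ring_scope.

Section PS.
Variables (K : fieldType) (s : nat).

Definition mon := {ffun 'I_s -> nat}.
Definition ps := mon -> K.

Definition mdeg (a : mon) : nat := (\max_(i < s) a i)%N.

Definition ps0 : ps := fun _ => 0.
Definition ps_const (c : K) : ps := fun a => if a == [ffun _ => 0%N] then c else 0.
Definition ps1 : ps := ps_const 1.
Definition ps_add (f g : ps) : ps := fun a => f a + g a.
Definition ps_opp (f : ps) : ps := fun a => - f a.
Definition ps_scale (c : K) (f : ps) : ps := fun a => c * f a.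
(* Cauchy product: (fg)_a = sum_{b <= a} f_b g_{a-b} *)
Definition ps_mul (f g : ps) : ps := fun a =>
  \sum_(b : {ffun 'I_s -> 'I_(mdeg a).+1} | [forall i, (b i <= a i)%N])
     f [ffun i => nat_of_ord (b i)] * g [ffun i => (a i - b i)%N].
Definition ps_exp (f : ps) (n : nat) : ps := iter n (ps_mul f) ps1.
Definition ps_var (j : 'I_s) : ps := fun a => if a == [ffun i => nat_of_bool (i == j)] then 1 else 0.
Definition pderiv (j : 'I_s) (f : ps) : ps :=
  fun a => (a j).+1%:R * f [ffun i => (a i + nat_of_bool (i == j))%N].

Definition in_maxideal (f : ps) : Prop := f [ffun _ => 0%N] = 0.

Definition ideal_gen (gens : seq ps) : ps -> Prop := fun f =>
  exists c : 'I_(size gens) -> ps,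
    f = \big[ps_add/ps0]_(i < size gens) ps_mul (c i) (nth ps0 gens i).
Definition ideal_sum (I J : ps -> Prop) : ps -> Prop := fun f =>
  exists g h, I g /\ J h /\ f = ps_add g h.
Definition radical (I : ps -> Prop) : ps -> Prop := fun f => exists n, I (ps_exp f n).

Definition ps_det (t : nat) (M : 'M[ps]_t) : ps :=
  \big[ps_add/ps0]_(sigma : 'S_t)
     ps_mul (ps_const (if odd_perm sigma then -1 else 1))
            (\big[ps_mul/ps1]_(i < t) M i (sigma i)).

Definition minors (t m n : nat) (M : 'M[ps]_(m, n)) : seq ps :=
  [seq ps_det (\matrix_(i < t, j < t) M (f i) (g j))
     | f : {ffun 'I_t -> 'I_m} <- enum {ffun 'I_t -> 'I_m}, g : {ffun 'I_t -> 'I_n} <- enum {ffun 'I_t -> 'I_n}].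
Definition I_t (t m n : nat) (M : 'M[ps]_(m, n)) : ps -> Prop := ideal_gen (minors t M).

(* A = [a_1 ... a_m]^T as a column *)
Definition I_1 (m : nat) (A : 'I_m -> ps) : ps -> Prop := ideal_gen [seq A i | i <- enum 'I_m].
Definition Jac (m : nat) (A : 'I_m -> ps) : 'M[ps]_(m, s) := \matrix_(i, j) pderiv j (A i).

(* vectors of R^m = M_{m,1} *)
Definition vec_add (m : nat) (v w : 'I_m -> ps) : 'I_m -> ps := fun p => ps_add (v p) (w p).
Definition vec_scale (m : nat) (r : ps) (v : 'I_m -> ps) : 'I_m -> ps := fun p => ps_mul r (v p).
Definition vec0 (m : nat) : 'I_m -> ps := fun _ => ps0.
Definition col_comb (m n : nat) (M : 'M[ps]_(m, n)) (c : 'I_n -> ps) : 'I_m -> ps :=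
  fun p => \big[ps_add/ps0]_(k < n) ps_mul (c k) (M p k).

Definition tangent_ext (m : nat) (A : 'I_m -> ps) : ('I_m -> ps) -> Prop := fun v =>
  exists (w : 'I_m -> ps) (d : 'I_s -> ps),
    (forall p, I_1 A (w p)) /\ v = vec_add w (col_comb (Jac A) d).

Definition ann_quot (m : nat) (N : ('I_m -> ps) -> Prop) : ps -> Prop :=
  fun r => forall v : 'I_m -> ps, N (vec_scale r v).

(* finite K-dimensionality of R^m / N : finitely many vectors span mod N *)
Definition vec_diff (m : nat) (v w : 'I_m -> ps) : 'I_m -> ps :=
  fun p => ps_add (v p) (ps_opp (w p)).
Definition findim_quot_mod (m : nat) (N : ('I_m -> ps) -> Prop) : Prop :=
  exists L : seq ('I_m -> ps), forall v : 'I_m -> ps,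
    exists c : 'I_(size L) -> K,
      N (vec_diff v (fun p => \big[ps_add/ps0]_(i < size L)
                                  ps_scale (c i) (nth (@vec0 m) L i p))).
Definition findim_quot_ring (I : ps -> Prop) : Prop :=
  exists L : seq ps, forall f : ps,
    exists c : 'I_(size L) -> K,
      I (ps_add f (ps_opp (\big[ps_add/ps0]_(i < size L) ps_scale (c i) (nth ps0 L i)))).

End PS.

From HB Require Import structures.
From mathcomp Require Import all_boot all_order all_fingroup all_algebra.
From mathcomp Require Import boolp zify.
Set Implicit Arguments. Unset Strict Implicit. Unset Printing Implicit Defensive.
Import GRing.Theory.
Local Open Scope ring_scope.

(* Let N = I_1(A) R^m + <columns of Jac(A)>, the column span of Theta; r annihilates
   R^m / N iff r e_p lies in N for every p.  For any matrix X, a maximal minor times e_p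
   lies in the column span of X (adjugate).  Conversely, if r e_p lies in the span for
   all p then r 1 = X C, so r^m = det (X C) is in I_m(X) by the Cauchy-Binet expansion.
   For X = Theta this gives sqrt I_m(Theta) = sqrt Ann.  Writing r 1 = W + Jac(A) D with
   W over I_1(A), the same expansion modulo I_1(A) puts r^m in J = I_1(A) + I_m(Jac A),
   whose generators clearly annihilate.
   If R^m / N is spanned by d vectors over K, the classes of h^k e_p for k <= md satisfy
   one relation common to all p; for h = x_j this is x_j^e times a unit annihilating
   R^m / N, so J contains a power of every variable and finitely many monomials span
   R / J.  Conversely J annihilates R^m / N, so a spanning set of R / J times the e_p
   spans R^m / N. *)

Section Ideals.
Variable R : comRingType.
Implicit Types (I : R -> Prop) (x y : R).

Definition is_ideal I :=
  [/\ I 0, (forall x y, I x -> I y -> I (x + y)) & (forall r x, I x -> I (r * x))].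

Lemma ideal_mulr I r x : is_ideal I -> I x -> I (x * r).
Proof. by case=> _ _ hM hx; rewrite mulrC; apply: hM. Qed.

Lemma ideal_big_sum I (T : Type) (r : seq T) (P : pred T) (F : T -> R) :
  is_ideal I -> (forall i, P i -> I (F i)) -> I (\sum_(i <- r | P i) F i).
Proof. by case=> h0 hD _ hF; apply: big_ind. Qed.

Lemma ideal_prodDl_sub I (T : Type) (r : seq T) (a b : T -> R) :
  is_ideal I -> (forall i, I (a i)) ->
  I (\prod_(i <- r) (a i + b i) - \prod_(i <- r) b i).
Proof.
move=> hI ha; elim: r => [|x r IH]; first by rewrite !big_nil subrr; case: hI.
rewrite !big_cons.
have -> : (a x + b x) * \prod_(j <- r) (a j + b j) - b x * \prod_(j <- r) b j =
   a x * \prod_(j <- r) (a j + b j) + b x * (\prod_(j <- r) (a j + b j) - \prod_(j <- r) b j).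
  by rewrite mulrDl mulrBr addrA.
by case: (hI) => _ hD hM; apply: hD; [apply: ideal_mulr | apply: hM].
Qed.

Lemma ideal_detDl_sub I n (W B : 'M[R]_n) :
  is_ideal I -> (forall i j, I (W i j)) -> I (\det (W + B) - \det B).
Proof.
move=> hI hW; rewrite /determinant -sumrB; apply: ideal_big_sum => // sg _.
rewrite -mulrBr; case: (hI) => _ _ hM; apply: hM.
under eq_bigr do rewrite mxE.
have := @ideal_prodDl_sub I _ (index_enum _) (fun i => W i (sg i)) (fun i => B i (sg i)) hI.
by apply => i.
Qed.

End Ideals.

Section ColumnSpan.
Variables (R : comRingType) (m n : nat) (X : 'M[R]_(m, n)).

Definition colspan (v : 'I_m -> R) :=
  exists c : 'I_n -> R, forall q, v q = \sum_k c k * X q k.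

Definition delta_vec (p : 'I_m) (r : R) : 'I_m -> R := fun q => if q == p then r else 0.

Definition coker_ann (r : R) := forall p, colspan (delta_vec p r).

Lemma colspan_lincomb (T : Type) (r : seq T) (a : T -> R) (w : T -> 'I_m -> R) :
  (forall k, colspan (w k)) -> colspan (fun q => \sum_(k <- r) a k * w k q).
Proof.
move=> h; have [cc hcc] := choice h.
exists (fun t => \sum_(k <- r) a k * cc k t) => q.
under eq_bigr do rewrite hcc mulr_sumr.
rewrite exchange_big /=; apply: eq_bigr => t _.
by rewrite mulr_suml; apply: eq_bigr => k _; rewrite mulrA.
Qed.

Lemma delta_vec_sum (T : Type) (r : seq T) (a b : T -> R) p q :
  delta_vec p (\sum_(k <- r) a k * b k) q = \sum_(k <- r) a k * delta_vec p (b k) q.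
Proof. by rewrite /delta_vec; case: ifP => _ //; rewrite big1 // => k _; rewrite mulr0. Qed.

Lemma scale_delta_sum (r : R) (v : 'I_m -> R) :
  (fun q => r * v q) = fun q => \sum_p v p * delta_vec p r q.
Proof.
apply/funext => q; rewrite (bigD1 q) //= big1 => [|p hp].
  by rewrite /delta_vec eqxx mulrC addr0.
by rewrite /delta_vec eq_sym (negbTE hp) mulr0.
Qed.

Lemma coker_annP r : coker_ann r <-> forall v, colspan (fun q => r * v q).
Proof.
split => [h v | h p]; first by rewrite scale_delta_sum; apply: colspan_lincomb.
have -> : delta_vec p r = fun q => r * delta_vec p 1 q.
  by apply/funext => q; rewrite /delta_vec; case: ifP; rewrite ?mulr1 ?mulr0.
exact: h.
Qed.

Lemma colspan_coker_ann (w : 'I_m -> R) : (forall q, coker_ann (w q)) -> colspan w.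
Proof.
move=> hw; have -> : w = fun q => \sum_p 1 * delta_vec p (w p) q.
  apply/funext => q; rewrite (bigD1 q) //= big1 => [|p hp].
    by rewrite /delta_vec eqxx mul1r addr0.
  by rewrite /delta_vec eq_sym (negbTE hp) mulr0.
by apply: colspan_lincomb => p; apply: hw.
Qed.

Lemma coker_ann_ideal : is_ideal coker_ann.
Proof.
split.
- move=> p; exists (fun _ => 0) => q.
  by rewrite big1 ?/delta_vec ?if_same // => k _; rewrite mul0r.
- move=> x y hx hy p; have [c hc] := hx p; have [d hd] := hy p.
  exists (fun k => c k + d k) => q.
  have -> : delta_vec p (x + y) q = delta_vec p x q + delta_vec p y q.
    by rewrite /delta_vec; case: ifP; rewrite ?addr0.
  by rewrite hc hd -big_split; apply: eq_bigr => k _; rewrite mulrDl.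
- move=> r x hx p; have [c hc] := hx p; exists (fun k => r * c k) => q.
  have -> : delta_vec p (r * x) q = r * delta_vec p x q.
    by rewrite /delta_vec; case: ifP; rewrite ?mulr0.
  by rewrite hc mulr_sumr; apply: eq_bigr => k _; rewrite mulrA.
Qed.

(* Via the adjugate when [f] is injective; otherwise the minor has a repeated row. *)
Lemma colspan_delta_minor (f : 'I_m -> 'I_m) (g : 'I_m -> 'I_n) p :
  colspan (delta_vec p (\det (mxsub f g X))).
Proof.
set S := mxsub f g X.
have [finj | fninj] := pselect (injective f); last first.
  have [i1 [i2 [ne e]]] : exists i1 i2, i1 != i2 /\ f i1 = f i2.
    apply: contra_notP fninj => H x y exy; apply/eqP; apply: contraT => nxy.
    by case: H; exists x, y.
  have -> : \det S = 0 by apply: (determinant_alternate ne) => j; rewrite !mxE e.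
  exists (fun _ => 0) => q; rewrite big1 ?/delta_vec ?if_same // => k _; exact: mul0r.
have [finv fK fKV] := injF_bij finj.
exists (fun k => \sum_(j | g j == k) \adj S j (finv p)) => q; rewrite /delta_vec.
have hS : (S *m \adj S) (finv q) (finv p) = ((\det S)%:M : 'M[R]_m) (finv q) (finv p).
  by rewrite mul_mx_adj.
rewrite !mxE in hS.
under eq_bigr do rewrite mulr_suml.
have -> : \sum_k \sum_(j | g j == k) \adj S j (finv p) * X q k =
          \sum_j \adj S j (finv p) * X q (g j).
  rewrite [RHS](partition_big g xpredT) //=; apply: eq_bigr => k _.
  by apply: eq_big => // j /eqP ->.
have -> : (q == p) = (finv q == finv p).
  by apply/eqP/eqP => [-> //| E]; rewrite -(fKV q) -(fKV p) E.
rewrite -mulrb -hS; apply: eq_bigr => j _.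
by rewrite mxE fKV mulrC.
Qed.

Lemma coker_ann_minor (f : 'I_m -> 'I_m) (g : 'I_m -> 'I_n) :
  coker_ann (\det (mxsub f g X)).
Proof. by move=> p; apply: colspan_delta_minor. Qed.

(* The Cauchy-Binet expansion, grouped by the column map [g]. *)
Lemma det_mulmx_colsub (C : 'M[R]_(n, m)) :
  \det (X *m C) = \sum_(g : {ffun 'I_m -> 'I_n}) (\prod_i C (g i) i) * \det (colsub g X).
Proof.
have E (sg : 'S_m) : \prod_i (X *m C)^T i (sg i) =
    \sum_(g : {ffun 'I_m -> 'I_n}) \prod_i (X (sg i) (g i) * C (g i) i).
  rewrite (eq_bigr (fun i => \sum_k X (sg i) k * C k i)) ?bigA_distr_bigA // => i _.
  by rewrite !mxE.
rewrite -det_tr {1}/determinant.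
under eq_bigr do rewrite E mulr_sumr.
rewrite /= exchange_big /=; apply: eq_bigr => g _.
rewrite -det_tr /determinant mulr_sumr; apply: eq_bigr => sg _.
rewrite big_split /= (mulrC (\prod_(i < m) X (sg i) (g i))) mulrCA.
by congr (_ * (_ * _)); apply: eq_bigr => i _; rewrite !mxE.
Qed.

Lemma ideal_det_mulmx (I : R -> Prop) (C : 'M[R]_(n, m)) : is_ideal I ->
  (forall g : 'I_m -> 'I_n, I (\det (colsub g X))) -> I (\det (X *m C)).
Proof.
move=> hI hX; rewrite det_mulmx_colsub; apply: ideal_big_sum => // g _.
by case: hI => _ _ hM; apply: hM.
Qed.

Lemma coker_ann_exp (I : R -> Prop) r : is_ideal I ->
  (forall g : 'I_m -> 'I_n, I (\det (colsub g X))) -> coker_ann r -> I (r ^+ m).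
Proof.
move=> hI hX h; have [cc hcc] := choice h.
have -> : r ^+ m = \det (X *m \matrix_(k, p) cc p k).
  rewrite -det_scalar; congr (\det _); apply/matrixP => q p.
  by rewrite !mxE mulrb -/(delta_vec p r q) hcc; apply: eq_bigr => k _; rewrite mxE mulrC.
exact: ideal_det_mulmx.
Qed.

End ColumnSpan.

Lemma exists_nonzero_mulmx_eq0 (F : fieldType) (D : nat) (M : 'M[F]_(D.+1, D)) :
  exists2 u : 'rV[F]_D.+1, u != 0 & u *m M = 0.
Proof.
have : kermx M != 0.
  rewrite kermx_eq0 /row_free; apply/negP => /eqP h.
  by have := rank_leq_col M; rewrite h ltnn.
move=> hk; have [i hi] : exists i, row i (kermx M) != 0.
  apply/existsP; apply: contraR hk; rewrite negb_exists => /forallP h.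
  by apply/eqP/row_matrixP => i; rewrite row0; apply/eqP/negbNE/h.
by exists (row i (kermx M)); rewrite // -row_mul mulmx_ker row0.
Qed.

Lemma sum_nat_mul_blocks (V : nmodType) (G : nat -> V) (m d : nat) :
  \sum_(0 <= i < m * d) G i = \sum_(p < m) \sum_(l < d) G (p * d + l)%N.
Proof.
elim: m => [|m IH]; first by rewrite mul0n big_geq // big_ord0.
rewrite big_ord_recr /= -IH mulSn addnC (big_cat_nat _ (leq_addr _ _)) //=.
congr (_ + _); rewrite -{1}[(m * d)%N]add0n big_addn addKn big_mkord.
by apply: eq_bigr => l _; rewrite addnC.
Qed.

(* [lia] does not look through finfun applications: abstract every [a i] first. *)
Ltac mon_lia := try lia;
  repeat match goal with H : context [@fun_of_fin _ _ _ _ _] |- _ => revert H end;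
  repeat match goal with |- context [@fun_of_fin ?A ?B ?P ?f ?i] =>
    let X := fresh "X" in move: (@fun_of_fin A B P f i) => X end;
  intros; lia.

Section PowerSeriesRing.
Variables (K : fieldType) (s : nat).
Local Notation ps := (ps K s).
Local Notation mon := (mon s).

Definition mle (a b : mon) : bool := [forall i, (a i <= b i)%N].
Definition madd (a b : mon) : mon := [ffun i => (a i + b i)%N].
Definition msub (a b : mon) : mon := [ffun i => (a i - b i)%N].
Definition mon0 : mon := [ffun _ => 0%N].

Lemma mleP (a b : mon) : reflect (forall i, (a i <= b i)%N) (mle a b).
Proof. exact: forallP. Qed.

(* The index range of the Cauchy product [ps_mul], as a list of monomials. *)
Definition lower_mons (a : mon) : seq mon :=
  map (fun b : {ffun 'I_s -> 'I_(mdeg a).+1} => [ffun i => nat_of_ord (b i)] : mon)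
    (filter (fun b : {ffun 'I_s -> 'I_(mdeg a).+1} => [forall i, (b i <= a i)%N])
       (enum {ffun 'I_s -> 'I_(mdeg a).+1})).

Lemma mem_lower_mons a b : (b \in lower_mons a) = mle b a.
Proof.
apply/idP/idP.
  case/mapP => b' + ->; rewrite mem_filter => /andP[/forallP H _].
  by apply/forallP => i; rewrite ffunE.
move=> /forallP H; apply/mapP.
have lt i : (b i < (mdeg a).+1)%N by rewrite ltnS (leq_trans (H i)) // leq_bigmax.
exists [ffun i => Ordinal (lt i)].
  by rewrite mem_filter mem_enum andbT; apply/forallP => i; rewrite ffunE /=.
by apply/ffunP => i; rewrite !ffunE.
Qed.

Lemma uniq_lower_mons a : uniq (lower_mons a).
Proof.
rewrite map_inj_in_uniq; first exact/filter_uniq/enum_uniq.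
move=> x y _ _ /ffunP E; apply/ffunP => i; apply/val_inj.
by have := E i; rewrite !ffunE.
Qed.

Lemma ps_mulE (f g : ps) a :
  ps_mul f g a = \sum_(b <- lower_mons a) f b * g (msub a b).
Proof.
rewrite /ps_mul /lower_mons big_map big_filter enumT [index_enum _]unlock.
by apply: eq_bigr => b _; congr (_ * g _); apply/ffunP => i; rewrite !ffunE.
Qed.

Lemma sum_lower_mons_msub (a : mon) (F : mon -> K) :
  \sum_(b <- lower_mons a) F b = \sum_(b <- lower_mons a) F (msub a b).
Proof.
rewrite -(big_map (msub a) xpredT); apply/perm_big/uniq_perm.
- exact: uniq_lower_mons.
- rewrite map_inj_in_uniq ?uniq_lower_mons // => x y; rewrite !mem_lower_mons.
  move=> /mleP hx /mleP hy /ffunP E; apply/ffunP => i.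
  by have := E i; rewrite !ffunE; have := hx i; have := hy i; mon_lia.
- move=> x; rewrite mem_lower_mons; apply/idP/mapP.
  + move=> /mleP hx; exists (msub a x).
      by rewrite mem_lower_mons; apply/mleP => i; rewrite ffunE; mon_lia.
    by apply/ffunP => i; rewrite !ffunE; have := hx i; mon_lia.
  + case=> y; rewrite mem_lower_mons => /mleP hy ->; apply/mleP => i.
    by rewrite ffunE; mon_lia.
Qed.

Lemma sum_lower_mons_mle (a b : mon) (F : mon -> K) : mle b a ->
  \sum_(c <- lower_mons b) F c = \sum_(c <- lower_mons a | mle c b) F c.
Proof.
move=> /mleP hb; rewrite -[RHS]big_filter; apply/perm_big/uniq_perm.
- exact: uniq_lower_mons.
- exact/filter_uniq/uniq_lower_mons.
move=> c; rewrite mem_filter !mem_lower_mons.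
apply/idP/andP => [/mleP hc | [] //]; split; apply/mleP => // i.
exact: leq_trans (hc i) (hb i).
Qed.

Lemma sum_lower_mons_madd (a c : mon) (F : mon -> K) : mle c a ->
  \sum_(d <- lower_mons (msub a c)) F (madd c d) = \sum_(b <- lower_mons a | mle c b) F b.
Proof.
move=> /mleP hc; rewrite -[RHS]big_filter -(big_map (madd c) xpredT).
apply/perm_big/uniq_perm.
- rewrite map_inj_in_uniq ?uniq_lower_mons // => x y _ _ /ffunP E; apply/ffunP => i.
  by have := E i; rewrite !ffunE; mon_lia.
- exact/filter_uniq/uniq_lower_mons.
- move=> b; rewrite mem_filter mem_lower_mons; apply/mapP/andP.
  + case=> d; rewrite mem_lower_mons => /mleP hd ->; split; apply/mleP => i;
      rewrite !ffunE //; have := hd i; rewrite ffunE; have := hc i; mon_lia.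
  + case=> /mleP h1 /mleP h2; exists (msub b c).
      rewrite mem_lower_mons; apply/mleP => i; rewrite !ffunE.
      by have := h1 i; have := h2 i; mon_lia.
    by apply/ffunP => i; rewrite !ffunE; have := h1 i; mon_lia.
Qed.

Lemma ps_mulC : commutative (@ps_mul K s).
Proof.
move=> f g; apply/funext => a; rewrite !ps_mulE sum_lower_mons_msub.
rewrite big_seq [RHS]big_seq; apply: eq_bigr => b; rewrite mem_lower_mons => /mleP hb.
rewrite mulrC; congr (_ * f _); congr g; apply/ffunP => i; rewrite !ffunE.
by have := hb i; mon_lia.
Qed.

Lemma ps_mulA : associative (@ps_mul K s).
Proof.
move=> f g h; apply/funext => a; rewrite !ps_mulE; symmetry.
under eq_bigr do rewrite ps_mulE big_distrl /=.
rewrite big_seq.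
under eq_bigr => b hb do (rewrite mem_lower_mons in hb; rewrite (sum_lower_mons_mle _ hb)).
rewrite -big_seq (exchange_big_dep xpredT) //= big_seq [RHS]big_seq.
apply: eq_bigr => c; rewrite mem_lower_mons => hc.
rewrite ps_mulE big_distrr /= -(sum_lower_mons_madd _ hc); apply: eq_bigr => d _.
rewrite mulrA; congr (_ * g _ * h _); apply/ffunP => i; rewrite !ffunE; mon_lia.
Qed.

Lemma ps_mul_constE c (f : ps) a : ps_mul (ps_const c) f a = c * f a.
Proof.
rewrite ps_mulE (bigD1_seq mon0) ?uniq_lower_mons //; last first.
  by rewrite mem_lower_mons; apply/mleP => i; rewrite ffunE.
rewrite big1 ?addr0 => [|b /negbTE hb]; last by rewrite /ps_const /mon0 hb mul0r.
rewrite /ps_const /mon0 eqxx /= ?addr0; congr (_ * f _).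
by apply/ffunP => i; rewrite !ffunE; mon_lia.
Qed.

Lemma ps_mul1 : left_id (@ps1 K s) (@ps_mul K s).
Proof. by move=> f; apply/funext => a; rewrite ps_mul_constE mul1r. Qed.

Lemma ps_mulDl : left_distributive (@ps_mul K s) (@ps_add K s).
Proof.
move=> f g h; apply/funext => a.
by rewrite /ps_add !ps_mulE -big_split; apply: eq_bigr => b _; rewrite mulrDl.
Qed.

Lemma ps_addA : associative (@ps_add K s).
Proof. by move=> f g h; apply/funext => a; rewrite /ps_add addrA. Qed.

Lemma ps_addC : commutative (@ps_add K s).
Proof. by move=> f g; apply/funext => a; rewrite /ps_add addrC. Qed.

Lemma ps_add0 : left_id (@ps0 K s) (@ps_add K s).
Proof. by move=> f; apply/funext => a; rewrite /ps_add /ps0 add0r. Qed.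

Lemma ps_addN : left_inverse (@ps0 K s) (@ps_opp K s) (@ps_add K s).
Proof. by move=> f; apply/funext => a; rewrite /ps_add /ps_opp /ps0 addNr. Qed.

End PowerSeriesRing.

HB.instance Definition _ (K : fieldType) (s : nat) := gen_eqMixin (ps K s).
HB.instance Definition _ (K : fieldType) (s : nat) := gen_choiceMixin (ps K s).
HB.instance Definition _ (K : fieldType) (s : nat) :=
  GRing.isZmodule.Build (ps K s) (@ps_addA K s) (@ps_addC K s)
    (@ps_add0 K s) (@ps_addN K s).

Lemma ps1_neq0 (K : fieldType) (s : nat) : @ps1 K s != 0.
Proof.
apply/eqP => /(congr1 (fun f : ps K s => f (mon0 s))).
by rewrite /ps1 /ps_const eqxx => /eqP; rewrite oner_eq0.
Qed.

HB.instance Definition _ (K : fieldType) (s : nat) :=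
  GRing.Zmodule_isComNzRing.Build (ps K s) (@ps_mulA K s) (@ps_mulC K s)
    (@ps_mul1 K s) (@ps_mulDl K s) (@ps1_neq0 K s).

Section PowerSeriesCoef.
Variables (K : fieldType) (s : nat).
Local Notation R := (ps K s).
Local Notation mon := (mon s).
Local Notation mon0 := (mon0 s).
Local Notation const := (@ps_const K s).

Lemma coefM (f g : R) a : (f * g) a = \sum_(b <- lower_mons a) f b * g (msub a b).
Proof. exact: ps_mulE. Qed.

Lemma coef_sum (I : Type) (r : seq I) (P : pred I) (F : I -> R) a :
  (\sum_(i <- r | P i) F i) a = \sum_(i <- r | P i) F i a.
Proof. by apply: (big_morph (fun f : R => f a)). Qed.

Lemma coefD (f g : R) a : (f + g) a = f a + g a. Proof. by []. Qed.
Lemma coefB (f g : R) a : (f - g) a = f a - g a. Proof. by []. Qed.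

Lemma coef1 a : (1 : R) a = (a == mon0)%:R.
Proof. by rewrite -[1 : R]/(@ps1 K s) /ps1 /ps_const; case: ifP. Qed.

Lemma coefCM c (f : R) a : (const c * f) a = c * f a.
Proof. exact: ps_mul_constE. Qed.

Lemma ps_constD : {morph const : a b / a + b}.
Proof. by move=> a b; apply/funext => x; rewrite coefD /ps_const; case: ifP; rewrite ?addr0. Qed.

Lemma ps_const0 : const 0 = 0.
Proof. by apply/funext => x; rewrite /ps_const; case: ifP. Qed.

Lemma ps_constM : {morph const : a b / a * b}.
Proof. by move=> a b; apply/funext => x; rewrite coefCM /ps_const; case: ifP; rewrite ?mulr0. Qed.

Lemma ps_const_sum (I : Type) (r : seq I) (P : pred I) (F : I -> K) :
  const (\sum_(i <- r | P i) F i) = \sum_(i <- r | P i) const (F i).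
Proof. exact: (big_morph const ps_constD ps_const0). Qed.

Lemma ps_constN1 : const (-1) = -1.
Proof.
apply/funext => a; rewrite -[- 1 : R]/(ps_opp (@ps1 K s)) /ps_opp /ps1 /ps_const.
by case: ifP; rewrite ?oppr0.
Qed.

Lemma ps_scaleE c (g : R) : ps_scale c g = const c * g.
Proof. by apply/funext => a; rewrite coefCM. Qed.

Lemma sum_lower_mons0 (F : mon -> K) : \sum_(b <- lower_mons mon0) F b = F mon0.
Proof.
rewrite (perm_big [:: mon0]) ?big_seq1 //; apply: uniq_perm; rewrite ?uniq_lower_mons //.
move=> b; rewrite mem_lower_mons inE; apply/mleP/eqP => [h|-> i] //.
by apply/ffunP => i; have := h i; rewrite !ffunE; mon_lia.
Qed.

Lemma coefM0 (f g : R) : (f * g) mon0 = f mon0 * g mon0.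
Proof.
rewrite coefM sum_lower_mons0; congr (_ * g _); apply/ffunP => i; rewrite !ffunE; mon_lia.
Qed.

Lemma coefX0 (f : R) k : (f ^+ k) mon0 = f mon0 ^+ k.
Proof. by elim: k => [|k IH]; rewrite ?expr0 ?coef1 ?eqxx // !exprS coefM0 IH. Qed.

Definition msize (a : mon) : nat := (\sum_i a i)%N.

Lemma mle_msize (a b : mon) : mle b a -> (msize b <= msize a)%N.
Proof. by move=> /mleP h; apply: leq_sum => i _; apply: h. Qed.

Lemma msize_msub (a b : mon) : mle b a -> msize (msub a b) = (msize a - msize b)%N.
Proof.
move=> hba; apply/eqP; rewrite -(eqn_add2r (msize b)) subnK ?mle_msize //.
move/mleP: hba => h; rewrite /msize -big_split /=; apply/eqP; apply: eq_bigr => i _.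
by rewrite ffunE subnK.
Qed.

Lemma msize_gt0 (b : mon) : b != mon0 -> (0 < msize b)%N.
Proof.
apply: contraR; rewrite -eqn0Ngt /msize sum_nat_eq0 => /forallP h.
by apply/eqP/ffunP => i; rewrite ffunE; apply/eqP; apply: h.
Qed.

Lemma coefX_eq0 (h : R) : h mon0 = 0 ->
  forall k (a : mon), (msize a < k)%N -> (h ^+ k) a = 0.
Proof.
move=> h0; elim=> [//|k IH] a ha.
rewrite exprS coefM big_seq big1 // => b; rewrite mem_lower_mons => hb.
have [->|nb] := eqVneq b mon0; first by rewrite h0 mul0r.
rewrite IH ?mulr0 // msize_msub //; have := msize_gt0 nb; have := mle_msize hb; lia.
Qed.

(* A unit [u] is inverted by a geometric series in [h = 1 - u / u(0)]; since
   [h(0) = 0], the coefficient of [a] in the inverse only involves the powers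
   [h ^+ k] with [k <= msize a]. *)
Lemma ps_unitP (u : R) : u mon0 != 0 -> exists w, u * w = 1.
Proof.
move=> hu; set c0 := u mon0.
pose h : R := 1 - const c0^-1 * u.
have h0 : h mon0 = 0 by rewrite /h coefB coefCM coef1 eqxx mulVf // subrr.
pose G (N : nat) : R := const c0^-1 * \sum_(k < N.+1) h ^+ k.
have G_stable c N : (msize c <= N)%N -> G N c = G (msize c) c.
  elim: N => [|N IH] hN; first by have -> : msize c = 0%N by lia.
  have [hl|hge] := ltnP (msize c) N.+1; last by have -> : msize c = N.+1 by lia.
  rewrite -IH // /G big_ord_recr /= mulrDr coefD [(const _ * h ^+ _) _]coefCM.
  by rewrite coefX_eq0 // mulr0 addr0.
exists (fun a => G (msize a) a); apply/funext => a.
have -> : (u * (fun a => G (msize a) a)) a = (u * G (msize a)) a.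
  rewrite !coefM big_seq [RHS]big_seq; apply: eq_bigr => b.
  rewrite mem_lower_mons => hb; rewrite G_stable // msize_msub //; lia.
have -> : u * G (msize a) = 1 - h ^+ (msize a).+1.
  rewrite /G mulrCA mulrA.
  have -> : const c0^-1 * u = - (h - 1) by rewrite /h addrAC subrr add0r opprK.
  by rewrite mulNr -subrX1 opprB.
by rewrite coefB coefX_eq0 // subr0.
Qed.

Lemma ps_poly_factor (h : R) D (u : 'I_D.+1 -> K) k0 : h mon0 = 0 -> u k0 != 0 ->
  exists e (w : R), \sum_k const (u k) * h ^+ k = h ^+ e * w /\ w mon0 != 0.
Proof.
move=> h0 uk0.
have [e ue emin] := @arg_minnP _ k0 (fun k => u k != 0) val uk0.
exists e, (\sum_(k : 'I_D.+1 | (e <= k)%N) const (u k) * h ^+ (k - e)); split.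
  rewrite mulr_sumr (bigID (fun k : 'I_D.+1 => (e <= k)%N)) /= [X in _ + X]big1 ?addr0.
    by apply: eq_bigr => k hk; rewrite mulrCA -exprD subnKC.
  move=> k; rewrite -ltnNge => hk.
  have /eqP -> : u k == 0 by apply: contraTT hk => /emin; rewrite -leqNgt.
  by rewrite ps_const0 mul0r.
rewrite coef_sum (bigD1 e) //= coefCM coefX0 h0 subnn expr0 mulr1 big1 ?addr0 //.
move=> k /andP [hek nke]; rewrite coefCM coefX0 h0 expr0n subn_eq0.
suff -> : (k <= e)%N = false by rewrite mulr0.
by apply: negbTE; rewrite -ltnNge ltn_neqAle hek andbT eq_sym.
Qed.

End PowerSeriesCoef.

Section PowerSeriesVars.
Variables (K : fieldType) (s : nat).
Local Notation R := (ps K s).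
Local Notation mon := (mon s).
Local Notation mon0 := (mon0 s).
Local Notation var := (@ps_var K s).

Definition mvarX (j : 'I_s) (E : nat) : mon := [ffun i => if i == j then E else 0%N].

Definition ps_mono (x : mon) : R := fun b => if b == x then 1 else 0.

Lemma ps_varE j : var j = ps_mono (mvarX j 1).
Proof. by []. Qed.

Lemma coef_varM j (g : R) a :
  (var j * g) a = if (0 < a j)%N then g (msub a (mvarX j 1)) else 0.
Proof.
rewrite ps_varE coefM /ps_mono; case: ifP => ha.
  rewrite (bigD1_seq (mvarX j 1)) ?uniq_lower_mons //=; last first.
    by rewrite mem_lower_mons; apply/mleP => i; rewrite ffunE; case: eqP => [->|].
  by rewrite eqxx mul1r big1 ?addr0 // => b /negbTE ->; rewrite mul0r.
rewrite big_seq big1 // => b; rewrite mem_lower_mons => /mleP hb.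
case: eqP => [e|]; last by rewrite mul0r.
by have := hb j; rewrite e ffunE eqxx ha.
Qed.

Lemma coef_varXM j E (g : R) a :
  (var j ^+ E * g) a = if (E <= a j)%N then g (msub a (mvarX j E)) else 0.
Proof.
elim: E a => [|E IH] a.
  by rewrite expr0 mul1r leq0n; congr g; apply/ffunP => i; rewrite !ffunE; case: eqP; mon_lia.
rewrite exprS -mulrA coef_varM IH.
have [h0|h0] := ltnP 0 (a j); last by have -> : (E < a j)%N = false by mon_lia.
rewrite [msub _ _ j]ffunE [mvarX j 1 j]ffunE eqxx.
have [h1|h1] := leqP E (a j - 1)%N; last by have -> : (E < a j)%N = false by mon_lia.
have -> : (E < a j)%N by mon_lia.
congr g; apply/ffunP => i; rewrite !ffunE; case: (eqVneq i j) => [->|_] /=; mon_lia.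
Qed.

Lemma coef_var0 j : var j mon0 = 0.
Proof. by rewrite /ps_var; case: eqP => // /ffunP /(_ j); rewrite !ffunE eqxx. Qed.

(* Each monomial outside the box [a i < E] is divisible by some [x_j ^ E];
   assign it to the first such [j]. *)
Lemma ps_varX_decomp (E : nat) (f : R) :
  (forall a : mon, (forall i, (a i < E)%N) -> f a = 0) ->
  exists g : 'I_s -> R, f = \sum_j var j ^+ E * g j.
Proof.
move=> hf.
pose g (j : 'I_s) : R := fun b =>
  let a := [ffun i => (b i + mvarX j E i)%N] in
  if [pick i | (E <= a i)%N] == Some j then f a else 0.
exists g; apply/funext => a; rewrite coef_sum.
under eq_bigr => j _ do rewrite coef_varXM.
have ea j : (E <= a j)%N -> [ffun i => (msub a (mvarX j E) i + mvarX j E i)%N] = a.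
  by move=> hj; apply/ffunP => i; rewrite !ffunE; case: eqP => [->|]; mon_lia.
case Epk: [pick i | (E <= a i)%N] => [j0|].
  have hj0 : (E <= a j0)%N by move: Epk; case: pickP => // x hx [<-].
  rewrite (bigD1 j0) //= hj0 /g /= ea // Epk eqxx big1 ?addr0 // => j hj.
  case: ifP => // hEj; rewrite ea // Epk; case: eqP => // [[e]].
  by move: hj; rewrite e eqxx.
have hn i : ~~ (E <= a i)%N by move: Epk; case: pickP => // hn _; rewrite hn.
rewrite hf ?big1 // => [j _|i]; first by rewrite (negbTE (hn j)).
by have := hn i; rewrite -ltnNge.
Qed.

Definition box_mons (E : nat) : seq mon :=
  map (fun b : {ffun 'I_s -> 'I_E} => [ffun i => nat_of_ord (b i)] : mon)
    (enum {ffun 'I_s -> 'I_E}).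

Lemma uniq_box_mons E : uniq (box_mons E).
Proof.
rewrite map_inj_in_uniq ?enum_uniq // => x y _ _ /ffunP e.
by apply/ffunP => i; apply/val_inj; have := e i; rewrite !ffunE.
Qed.

Lemma mem_box_mons E (a : mon) : (forall i, (a i < E)%N) -> a \in box_mons E.
Proof.
move=> h; apply/mapP; exists [ffun i => Ordinal (h i)]; first by rewrite mem_enum.
by apply/ffunP => i; rewrite !ffunE.
Qed.

(* With [x_j ^ E] in [J] for all [j], the monomials in the box [a i < E] span [R / J]. *)
Lemma findim_quot_ring_varX (J : R -> Prop) :
  is_ideal J -> (forall j, exists e, J (var j ^+ e)) -> findim_quot_ring J.
Proof.
move=> hJ hJvar; have [ej hej] := choice hJvar; set E := (\max_j ej j)%N.
have hE j : J (var j ^+ E).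
  rewrite -(subnK (leq_bigmax j : (ej j <= E)%N)) exprD.
  by case: hJ => _ _ hM; apply/hM/hej.
set B := box_mons E.
exists (map ps_mono B) => f; exists (fun i => f (nth mon0 B i)).
have -> : \big[@ps_add K s/@ps0 K s]_(i < size (map ps_mono B))
    ps_scale (f (nth mon0 B i)) (nth (@ps0 K s) (map ps_mono B) i) =
    \sum_(x <- B) ps_const (f x) * ps_mono x.
  rewrite size_map (big_nth mon0) big_mkord; apply: eq_bigr => i _.
  by rewrite ps_scaleE (nth_map mon0).
set P := \sum_(x <- B) _.
change (J (f - P)).
have [g ->] : exists g : 'I_s -> R, f - P = \sum_j var j ^+ E * g j.
  apply: ps_varX_decomp => a ha; rewrite coefB /P coef_sum.
  rewrite (bigD1_seq a) ?uniq_box_mons ?mem_box_mons //= big1 => [|x hx].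
    by rewrite coefCM /ps_mono eqxx mulr1 addr0 subrr.
  by rewrite coefCM /ps_mono eq_sym (negbTE hx) mulr0.
by apply: ideal_big_sum => // j _; apply: ideal_mulr.
Qed.

End PowerSeriesVars.

Section GeneratedIdeals.
Variables (K : fieldType) (s : nat).
Local Notation R := (ps K s).

Lemma ps_expE (f : R) n : ps_exp f n = f ^+ n.
Proof. by elim: n => [|n IH] //=; rewrite exprS -IH. Qed.

Lemma ps_detE t (M : 'M[R]_t) : ps_det M = \det M.
Proof.
apply: eq_bigr => sg _; congr (_ * _).
by case: (odd_perm sg); rewrite ?expr1 ?expr0 ?ps_constN1.
Qed.

Lemma ideal_genP (gens : seq R) f :
  ideal_gen gens f <-> exists c : 'I_(size gens) -> R, f = \sum_i c i * gens`_i.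
Proof. by []. Qed.

Lemma ideal_gen_ideal (gens : seq R) : is_ideal (ideal_gen gens).
Proof.
split.
- by apply/ideal_genP; exists (fun _ => 0); rewrite big1 // => i _; rewrite mul0r.
- move=> x y /ideal_genP [c ->] /ideal_genP [d ->]; apply/ideal_genP.
  exists (fun i => c i + d i).
  by rewrite -big_split; apply: eq_bigr => i _; rewrite mulrDl.
- move=> r x /ideal_genP [c ->]; apply/ideal_genP; exists (fun i => r * c i).
  by rewrite mulr_sumr; apply: eq_bigr => i _; rewrite mulrA.
Qed.

Lemma ideal_gen_mem (gens : seq R) x : x \in gens -> ideal_gen gens x.
Proof.
move=> hx; have hi : (index x gens < size gens)%N by rewrite index_mem.
apply/ideal_genP; exists (fun i => (i == Ordinal hi)%:R).
rewrite (bigD1 (Ordinal hi)) //= eqxx big1 ?mul1r ?addr0 ?nth_index //.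
by move=> i /negbTE ->; rewrite mul0r.
Qed.

Lemma ideal_gen_min (gens : seq R) (I : R -> Prop) :
  is_ideal I -> (forall x, x \in gens -> I x) -> forall f, ideal_gen gens f -> I f.
Proof.
move=> hI hg f /ideal_genP [c ->]; apply: ideal_big_sum => // i _.
by case: hI => _ _ hM; apply/hM/hg/mem_nth.
Qed.

Lemma ideal_sum_ideal (I J : R -> Prop) :
  is_ideal I -> is_ideal J -> is_ideal (ideal_sum I J).
Proof.
move=> [i0 iD iM] [j0 jD jM]; split.
- by exists 0, 0; do 2!split => //; exact: (esym (addr0 (0 : R))).
- move=> _ _ [g [h [hg [hh ->]]]] [g' [h' [hg' [hh' ->]]]].
  exists (g + g'), (h + h').
  by split; last split; [exact: iD | exact: jD | exact: addrACA].
- move=> r _ [g [h [hg [hh ->]]]]; exists (r * g), (r * h).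
  by split; last split; [exact: iM | exact: jM | exact: mulrDr].
Qed.

Lemma I_t_minor m n (X : 'M[R]_(m, n)) (f : 'I_m -> 'I_m) (g : 'I_m -> 'I_n) :
  I_t m X (\det (mxsub f g X)).
Proof.
apply: ideal_gen_mem; apply/allpairsP; exists ([ffun i => f i], [ffun j => g j]).
rewrite !mem_enum ps_detE; split => //=; congr (\det _).
by apply/matrixP => i j; rewrite !mxE !ffunE.
Qed.

Lemma I_t_coker_ann m n (X : 'M[R]_(m, n)) f : I_t m X f -> coker_ann X f.
Proof.
apply: ideal_gen_min; first exact: coker_ann_ideal.
move=> _ /allpairsP [[f' g] [_ _ ->]]; rewrite ps_detE.
exact: (coker_ann_minor X f' g).
Qed.

Lemma coker_ann_I_t m n (X : 'M[R]_(m, n)) r : coker_ann X r -> I_t m X (r ^+ m).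
Proof. by apply: coker_ann_exp; [exact: ideal_gen_ideal | move=> g; apply: I_t_minor]. Qed.

Lemma radical_eq_exp (I J : R -> Prop) k :
  (forall f, I f -> J f) -> (forall f, J f -> I (f ^+ k)) ->
  forall f, radical I f <-> radical J f.
Proof.
move=> hIJ hJI f; split=> [[e he] | [e he]]; first by exists e; apply: hIJ.
by exists (e * k)%N; rewrite ps_expE exprM; apply: hJI; rewrite -ps_expE.
Qed.

Lemma eq_radical (I J : R -> Prop) :
  (forall f, I f <-> J f) -> forall f, radical I f <-> radical J f.
Proof. by move=> hIJ f; split=> -[k hk]; exists k; apply/hIJ. Qed.

Lemma vec_addE m (v w : 'I_m -> R) q : vec_add v w q = v q + w q.
Proof. by []. Qed.

Lemma col_combE m n (X : 'M[R]_(m, n)) c q : col_comb X c q = \sum_k c k * X q k.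
Proof. by []. Qed.

Lemma colspan_col_comb m n (X : 'M[R]_(m, n)) v :
  colspan X v <-> exists c, v = col_comb X c.
Proof. by split=> [[c hc] | [c ->]]; exists c => //; apply/funext => q; rewrite hc. Qed.

End GeneratedIdeals.

Section TangentModule.
Variables (K : fieldType) (s m : nat) (A : 'I_m -> ps K s).
Variables (n : nat) (X : 'M[ps K s]_(m, n)).
Hypothesis tangent_extE : forall v, tangent_ext A v <-> colspan X v.
Local Notation R := (ps K s).
Local Notation J := (ideal_sum (I_1 A) (I_t m (Jac A))).

Lemma ideal_J : is_ideal J.
Proof. by apply: ideal_sum_ideal; apply: ideal_gen_ideal. Qed.

Lemma ann_quot_tangent_ext r : ann_quot (tangent_ext A) r <-> coker_ann X r.
Proof.
rewrite coker_annP; split=> h v; first exact/tangent_extE/h.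
exact/tangent_extE/h.
Qed.

Lemma J_coker_ann f : J f -> coker_ann X f.
Proof.
have [_ hD _] := coker_ann_ideal X.
have [I1_0 _ _] := ideal_gen_ideal [seq A i | i <- enum 'I_m].
move=> [g [h [hg [hh ->]]]]; apply: hD.
- apply: (ideal_gen_min (coker_ann_ideal X)) hg => _ /mapP [i _ ->] p.
  apply/tangent_extE; exists (delta_vec p (A i)), (fun _ => 0); split.
    move=> q; rewrite /delta_vec; case: ifP => _ //.
    by apply/ideal_gen_mem/map_f; rewrite mem_enum.
  apply/funext => q; rewrite vec_addE col_combE big1 ?addr0 // => k _.
  exact: mul0r.
- apply: (ideal_gen_min (coker_ann_ideal X)) hh => _ /allpairsP [[f' g'] [_ _ ->]] p /=.
  have [c hc] := colspan_delta_minor (Jac A) f' g' p.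
  apply/tangent_extE; exists (fun _ => 0), c; split => //.
  by apply/funext => q; rewrite vec_addE col_combE -hc ps_detE add0r.
Qed.

(* If [r e_p = w_p + Jac(A) d_p] for all [p], then [r%:M = W + Jac(A) D] and
   [r ^+ m = det (W + Jac(A) D)] is congruent to [det (Jac(A) D)] modulo [I_1 A]. *)
Lemma coker_ann_J r : coker_ann X r -> J (r ^+ m).
Proof.
move=> h.
have h' p : exists wd : ('I_m -> R) * ('I_s -> R),
    (forall q, I_1 A (wd.1 q)) /\ delta_vec p r = vec_add wd.1 (col_comb (Jac A) wd.2).
  by have /tangent_extE [w [d hwd]] := h p; exists (w, d).
have [wd hwd] := choice h'.
pose W : 'M[R]_m := \matrix_(q, p) (wd p).1 q.
pose D : 'M[R]_(s, m) := \matrix_(k, p) (wd p).2 k.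
have rWD : r%:M = W + Jac A *m D.
  apply/matrixP => q p; rewrite !mxE mulrb -/(delta_vec p r q).
  have [_ ->] := hwd p; congr (_ + _).
  by apply: eq_bigr => k _; rewrite [D _ _]mxE mulrC.
exists (\det (W + Jac A *m D) - \det (Jac A *m D)), (\det (Jac A *m D)); split; last split.
- apply: ideal_detDl_sub; first exact: ideal_gen_ideal.
  by move=> i j; rewrite mxE; case: (hwd j).
- by apply: ideal_det_mulmx; [exact: ideal_gen_ideal | move=> g; apply: I_t_minor].
- by rewrite -[ps_add _ _]/(_ + _ : R) subrK -rWD det_scalar.
Qed.

End TangentModule.

Section FiniteColength.
Variables (K : fieldType) (s m n : nat) (X : 'M[ps K s]_(m, n)).
Local Notation R := (ps K s).
Local Notation mon0 := (mon0 s).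

Lemma eq_findim_quot_mod (N N' : ('I_m -> R) -> Prop) :
  (forall v, N v <-> N' v) -> findim_quot_mod N -> findim_quot_mod N'.
Proof. by move=> hN [L hL]; exists L => v; have [c hc] := hL v; exists c; apply/hN. Qed.

(* With [d] vectors spanning [R^m / colspan X] over [K], the [m d + 1] families
   [(h ^+ k e_p)_p] satisfy one common nontrivial [K]-linear relation. *)
Lemma coker_ann_poly_of_findim (h : R) : findim_quot_mod (colspan X) ->
  exists D (u : 'I_D.+1 -> K) k0, u k0 != 0 /\ coker_ann X (\sum_k ps_const (u k) * h ^+ k).
Proof.
case=> L hL; set d := size L; set D := (m * d)%N.
pose Lsum (c : 'I_d -> K) (q : 'I_m) : R :=
  \sum_(i < d) ps_scale (c i) (nth (@vec0 K s m) L i q).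
have hL' (kp : 'I_D.+1 * 'I_m) :
    exists c, colspan X (fun q => delta_vec kp.2 (h ^+ kp.1) q - Lsum c q).
  exact: hL.
have [cc hcc] := choice hL'.
pose M : 'M[K]_(D.+1, D) := \matrix_(k, i) mxvec (\matrix_(p, l) cc (k, p) l) 0 i.
have [u unz uM] := exists_nonzero_mulmx_eq0 M.
have rel p l : \sum_k u 0 k * cc (k, p) l = 0.
  have := congr1 (fun Y : 'rV_D => Y 0 (mxvec_index p l)) uM; rewrite !mxE; apply: etrans.
  by apply: eq_bigr => k _; rewrite !mxE mxvecE mxE.
have [k0 uk0] : exists k0, u 0 k0 != 0.
  apply/existsP; apply: contraR unz; rewrite negb_exists => /forallP hu.
  by apply/eqP/matrixP => i k; rewrite mxE (ord1 i); apply/eqP/negbNE/hu.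
exists D, (u 0), k0; split => // p.
have -> : delta_vec p (\sum_k ps_const (u 0 k) * h ^+ k) =
    fun q => \sum_k ps_const (u 0 k) * (delta_vec p (h ^+ k) q - Lsum (cc (k, p)) q).
  apply/funext => q; rewrite delta_vec_sum.
  under [RHS]eq_bigr do rewrite mulrBr.
  rewrite sumrB; suff -> : \sum_k ps_const (u 0 k) * Lsum (cc (k, p)) q = 0 by rewrite subr0.
  under eq_bigr do rewrite mulr_sumr.
  rewrite exchange_big big1 // => i _.
  under eq_bigr do rewrite ps_scaleE mulrA -ps_constM.
  by rewrite -mulr_suml -ps_const_sum rel ps_const0 mul0r.
by apply: colspan_lincomb => k; apply: (hcc (k, p)).
Qed.

Lemma coker_ann_pow_of_findim (h : R) : h mon0 = 0 -> findim_quot_mod (colspan X) ->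
  exists e, coker_ann X (h ^+ e).
Proof.
move=> h0 /(coker_ann_poly_of_findim h) [D [u [k0 [uk0 hann]]]].
have [e [w [hw w0]]] := ps_poly_factor h0 uk0.
have [w' hw'] := ps_unitP w0.
exists e; have -> : h ^+ e = w' * \sum_k ps_const (u k) * h ^+ k.
  by rewrite hw mulrCA [w' * w]mulrC hw' mulr1.
by case: (coker_ann_ideal X) => _ _ hM; apply: hM.
Qed.

(* The vectors [L_l e_p], with [L_l] spanning [R / I], are listed at index [p d + l]. *)
Lemma findim_quot_mod_of_ring (I : R -> Prop) :
  (forall f, I f -> coker_ann X f) -> findim_quot_ring I -> findim_quot_mod (colspan X).
Proof.
move=> hI [L hL]; set d := size L.
pose Le (i : nat) (q : 'I_m) : R := if val q == (i %/ d)%N then L`_(i %% d) else 0.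
exists [seq Le i | i <- iota 0 (m * d)] => v.
pose vn (p : nat) : R := oapp v 0 (insub p).
have [cc hcc] := choice (fun p : nat => hL (vn p)).
pose cn (p l : nat) : K := oapp (cc p) 0 (insub l).
exists (fun i => cn (i %/ d)%N (i %% d)%N); apply: colspan_coker_ann => q; apply: hI.
rewrite /vec_diff size_map size_iota.
have -> : \big[@ps_add K s/@ps0 K s]_(i < m * d)
    ps_scale (cn (i %/ d)%N (i %% d)%N)
      (nth (@vec0 K s m) [seq Le i | i <- iota 0 (m * d)] i q) =
    \sum_(0 <= i < m * d) ps_const (cn (i %/ d)%N (i %% d)%N) * Le i q.
  rewrite big_mkord; apply: eq_bigr => i _.
  by rewrite ps_scaleE (nth_map 0%N) ?size_iota // nth_iota.
rewrite sum_nat_mul_blocks (bigD1 q) //= [X in _ + X]big1 => [|p hp]; last first.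
  apply: big1 => l _; have hd : (0 < d)%N by apply: leq_ltn_trans (ltn_ord l).
  rewrite /Le divnMDl // divn_small // addn0.
  suff -> : (val q == val p) = false by rewrite mulr0.
  by apply/negbTE; apply: contra hp => /eqP/val_inj ->.
rewrite addr0; have := hcc (val q); rewrite /vn valK /=; congr (I (_ - _)).
apply: eq_bigr => l _; have hd : (0 < d)%N by apply: leq_ltn_trans (ltn_ord l).
rewrite /Le /cn divnMDl // divn_small // addn0 modnMDl modn_small // eqxx valK.
by rewrite ps_scaleE.
Qed.

End FiniteColength.

Local Close Scope ring_scope.
Unset Implicit Arguments. Set Strict Implicit.

Theorem mainTheorem4 (K : fieldType) (s m : nat) (A : 'I_m -> ps K s)
  (hA : forall i, in_maxideal (A i)) (hms : (m <= s)%N)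
  (n : nat) (Theta : 'M[ps K s]_(m, n))
  (hTheta : forall v : 'I_m -> ps K s,
      tangent_ext A v <-> exists c : 'I_n -> ps K s, v = col_comb Theta c) :
  (forall f, radical (ideal_sum (I_1 A) (I_t m (Jac A))) f <-> radical (I_t m Theta) f) /\
  (forall f, radical (I_t m Theta) f <-> radical (ann_quot (tangent_ext A)) f) /\
  (findim_quot_mod (tangent_ext A) <-> findim_quot_ring (ideal_sum (I_1 A) (I_t m (Jac A)))).
Proof.
have tangent_extE v : tangent_ext A v <-> colspan Theta v.
  by rewrite hTheta; apply: iff_sym; apply: colspan_col_comb.
have rad_J := radical_eq_exp (J_coker_ann tangent_extE) (coker_ann_J tangent_extE).
have rad_I := radical_eq_exp (@I_t_coker_ann K s m n Theta) (@coker_ann_I_t K s m n Theta).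
have rad_ann := eq_radical (ann_quot_tangent_ext tangent_extE).
split; [|split] => [f | f |].
- by rewrite rad_J rad_I.
- by rewrite rad_I rad_ann.
have fin_iff : findim_quot_mod (tangent_ext A) <-> findim_quot_mod (colspan Theta).
  by split; apply: eq_findim_quot_mod => v; [|apply: iff_sym]; apply: tangent_extE.
rewrite fin_iff; split; last exact: findim_quot_mod_of_ring (J_coker_ann tangent_extE).
move=> hfin; apply: findim_quot_ring_varX (ideal_J A) _ => j.
have [e he] := coker_ann_pow_of_findim (coef_var0 K j) hfin.
by exists (e * m); rewrite exprM; apply: (coker_ann_J tangent_extE).
Qed.
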